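(* Let $\lambda_1\ge\lambda_2\ge\lambda_3\ge\lambda_4\ge0$ with $\sum_i\lambda_i=1$, and let $$\rho_{\vec\lambda}=\lambda_1\Phi_1+\lambda_2|01\rangle\langle01|+\lambda_3\Phi_2+\lambda_4|10\rangle\langle10|,\qquad \sigma_{\vec\lambda}=\sum_{j=1}^4\lambda_j\Phi_j.$$ If $1-\lambda_1-2\lambda_2\ge 0$, then there exists a non-entangling map $\Lambda:\mathcal{D}\to\mathcal{D}$ such that $\Lambda(\rho_{\vec\lambda})=\sigma_{\vec\lambda}$.
   Context: $\mathcal{D}$ is the set of two-qubit density matrices on $\mathbb{C}^2\otimes\mathbb{C}^2$ (Hermitian, positive semidefinite, trace one $4\times4$ matrices), written in the computational basis $\{|ij\rangle\}_{i,j\in\{0,1\}}$. The Bell vectors are $|\Phi_1\rangle=\frac{1}{\sqrt2}(|00\rangle+|11\rangle)$, $|\Phi_2\rangle=\frac{1}{\sqrt2}(|00\rangle-|11\rangle)$, $|\Phi_3\rangle=\frac{1}{\sqrt2}(|10\rangle+|01\rangle)$, $|\Phi_4\rangle=\frac{1}{\sqrt2}(|10\rangle-|01\rangle)$, and $\Phi_i=|\Phi_i\rangle\langle\Phi_i|$. A state is separable if it is a convex combination of product states $|\phi\rangle\langle\phi|\otimes|\chi\rangle\langle\chi|$. A map $\Lambda:\mathcal{D}\to\mathcal{D}$ is non-entangling (NE) if it is completely positive and trace preserving and maps every separable state to a separable state. *)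

From HB Require Import structures.
From mathcomp Require Import all_boot all_order all_algebra.
From mathcomp Require Import reals.
From mathcomp Require Import complex mxtens.
Set Implicit Arguments.
Unset Strict Implicit.
Unset Printing Implicit Defensive.
Import Order.TTheory GRing.Theory Num.Theory.
Local Open Scope ring_scope.

Section QI.
Variable R : realType.
Local Notation C := (R[i]).

Definition adjmx {m n} (A : 'M[C]_(m, n)) : 'M[C]_(n, m) := (map_mx Num.conj A)^T.

Definition hermitian {n} (A : 'M[C]_n) : Prop := adjmx A = A.

Definition psd {n} (A : 'M[C]_n) : Prop :=
  hermitian A /\ forall v : 'cV[C]_n, 0 <= (adjmx v *m A *m v) 0 0.

Definition density {n} (A : 'M[C]_n) : Prop := psd A /\ \tr A = 1.

Definition proj {n} (v : 'cV[C]_n) : 'M[C]_n := v *m adjmx v.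

Definition unit_vec {n} (v : 'cV[C]_n) : Prop := (adjmx v *m v) 0 0 = 1.

(* computational basis |ij> of C^2 (x) C^2, with index i*2+j (mxtens_index) *)
Definition ket (i j : 'I_2) : 'cV[C]_(2 * 2) :=
  delta_mx (mxtens_index (i, j)) 0.

Definition invsqrt2 : C := real_complex R (Num.sqrt (2 : R))^-1.

Definition bell1 : 'cV[C]_(2*2) := invsqrt2 *: (ket 0 0 + ket 1 1).
Definition bell2 : 'cV[C]_(2*2) := invsqrt2 *: (ket 0 0 - ket 1 1).
Definition bell3 : 'cV[C]_(2*2) := invsqrt2 *: (ket 1 0 + ket 0 1).
Definition bell4 : 'cV[C]_(2*2) := invsqrt2 *: (ket 1 0 - ket 0 1).

Definition separable (rho : 'M[C]_(2 * 2)) : Prop :=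
  exists (N : nat) (p : 'I_N -> R) (phi chi : 'I_N -> 'cV[C]_2),
    (forall k, 0 <= p k) /\ \sum_(k < N) p k = 1 /\
    (forall k, unit_vec (phi k) /\ unit_vec (chi k)) /\
    rho = \sum_(k < N) real_complex R (p k) *: (proj (phi k) *t proj (chi k)).

(* (id_k (x) L) applied to X acting on C^k (x) C^(2*2) *)
Definition ampl (k : nat) (L : 'M[C]_(2 * 2) -> 'M[C]_(2 * 2))
    (X : 'M[C]_(k * (2 * 2))) : 'M[C]_(k * (2 * 2)) :=
  \matrix_(p, q)
    let: (i, a) := mxtens_unindex p in
    let: (j, b) := mxtens_unindex q in
    L (\matrix_(a', b') X (mxtens_index (i, a')) (mxtens_index (j, b'))) a b.

Definition completely_positive (L : 'M[C]_(2 * 2) -> 'M[C]_(2 * 2)) : Prop :=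
  forall (k : nat) (X : 'M[C]_(k * (2 * 2))), psd X -> psd (ampl L X).

Definition trace_preserving (L : 'M[C]_(2 * 2) -> 'M[C]_(2 * 2)) : Prop :=
  forall X, \tr (L X) = \tr X.

Definition non_entangling (L : {linear 'M[C]_(2 * 2) -> 'M[C]_(2 * 2)}) : Prop :=
  completely_positive L /\ trace_preserving L /\
  forall rho, density rho -> separable rho -> separable (L rho).

Definition rho_lam (l1 l2 l3 l4 : R) : 'M[C]_(2 * 2) :=
  real_complex R l1 *: proj bell1 + real_complex R l2 *: proj (ket 0 1)
  + real_complex R l3 *: proj bell2 + real_complex R l4 *: proj (ket 1 0).

Definition sigma_lam (l1 l2 l3 l4 : R) : 'M[C]_(2 * 2) :=
  real_complex R l1 *: proj bell1 + real_complex R l2 *: proj bell2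
  + real_complex R l3 *: proj bell3 + real_complex R l4 *: proj bell4.

End QI.

From Pilot Require Import Defs.
From HB Require Import structures.
From mathcomp Require Import all_boot all_order all_algebra.
From mathcomp Require Import reals complex mxtens.
From mathcomp Require Import ring lra.
Set Implicit Arguments.
Unset Strict Implicit.
Unset Printing Implicit Defensive.
Import Order.TTheory GRing.Theory Num.Theory.
Local Open Scope ring_scope.

(* Measure in the orthonormal basis {Phi_1, Phi_2, |01>, |10>}; on outcome Phi_1
   prepare Phi_1, on the other three prepare tau = t2 Phi_2 + t3 Phi_3 + t4 Phi_4
   with t_j = lambda_j / (lambda_2 + lambda_3 + lambda_4).  This map is a sum of
   rank-one Kraus maps, preserves the trace and sends rho_lambda to sigma_lambda.
   For a separable rho, Cauchy-Schwarz on each product state gives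
   q = <Phi_1|rho|Phi_1> <= 1/2, so the output q Phi_1 + (1 - q) tau is a
   Bell-diagonal state whose weights q, (1 - q) t_j are at most 1/2 (this is where
   1 - lambda_1 - 2 lambda_2 >= 0 is used).  Such a state is a nonnegative
   combination of the pairs Phi_i + Phi_j, and each pair is separable: up to a
   phase, (Phi_i + Phi_j) / sqrt 2 and (Phi_i - Phi_j) / sqrt 2 are product
   vectors. *)

Section NonEntanglingChannel.
Variable R : realType.
Local Notation C := R[i].
Local Notation "x %:C" := (real_complex R x).
Local Notation s := (invsqrt2 R).
Local Notation bell1 := (bell1 R).
Local Notation bell2 := (bell2 R).
Local Notation bell3 := (bell3 R).
Local Notation bell4 := (bell4 R).
Local Notation ket := (ket R).
Local Notation e_ a := (delta_mx a 0 : 'cV[C]_2).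
Local Notation endo := ('M[C]_(2 * 2) -> 'M[C]_(2 * 2)).

(** * Positive matrices and quadratic forms *)

(* Unlike [rmorphD] and friends, these keep the head [Num.conj], so that
   [conj_invsqrt2] and [conjCi] still apply after rewriting. *)
Lemma conjCD (x y : C) : (x + y)^* = x^* + y^*. Proof. exact: rmorphD. Qed.
Lemma conjCN (x : C) : (- x)^* = - x^*. Proof. exact: rmorphN. Qed.
Lemma conjCM (x y : C) : (x * y)^* = x^* * y^*. Proof. exact: rmorphM. Qed.

Lemma adjmxE m n (A : 'M[C]_(m, n)) i j : adjmx A i j = (A j i)^*.
Proof. by rewrite !mxE. Qed.

Lemma adjmxK m n (A : 'M[C]_(m, n)) : adjmx (adjmx A) = A.
Proof. by apply/matrixP=> i j; rewrite !adjmxE conjCK. Qed.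

Lemma adjmxD m n (A B : 'M[C]_(m, n)) : adjmx (A + B) = adjmx A + adjmx B.
Proof. by rewrite /adjmx map_mxD linearD. Qed.

Lemma adjmxZ m n c (A : 'M[C]_(m, n)) : adjmx (c *: A) = c^* *: adjmx A.
Proof. by rewrite /adjmx map_mxZ linearZ. Qed.

Lemma adjmxM m n p (A : 'M[C]_(m, n)) (B : 'M[C]_(n, p)) :
  adjmx (A *m B) = adjmx B *m adjmx A.
Proof. by rewrite /adjmx map_mxM trmx_mul. Qed.

Lemma adjmx_tens m n p q (A : 'M[C]_(m, n)) (B : 'M[C]_(p, q)) :
  adjmx (A *t B) = adjmx A *t adjmx B.
Proof. by rewrite /adjmx map_mxT trmx_tens. Qed.

Lemma psd_mulmx_adj m n (A : 'M[C]_n) (B : 'M[C]_(m, n)) :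
  psd A -> psd (B *m A *m adjmx B).
Proof.
(* Qualified, since [hermitian] is also a notation of sesquilinear.v. *)
case=> hA pA; split; first by rewrite /Defs.hermitian !adjmxM adjmxK hA mulmxA.
by move=> v; have := pA (adjmx B *m v); rewrite adjmxM adjmxK !mulmxA.
Qed.

Lemma psdD n (A B : 'M[C]_n) : psd A -> psd B -> psd (A + B).
Proof.
case=> hA pA [hB pB]; split; first by rewrite /Defs.hermitian adjmxD hA hB.
by move=> v; rewrite mulmxDr mulmxDl mxE addr_ge0.
Qed.

Lemma psdZ n c (A : 'M[C]_n) : 0 <= c -> psd A -> psd (c *: A).
Proof.
move=> c0 [hA pA]; split; first by rewrite /Defs.hermitian adjmxZ hA conj_Creal ?ger0_real.
by move=> v; rewrite -scalemxAr -scalemxAl mxE mulr_ge0.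
Qed.

Definition inner n (u v : 'cV[C]_n) : C := (adjmx u *m v) 0 0.

Definition qform n (v : 'cV[C]_n) (A : 'M[C]_n) : C := (adjmx v *m A *m v) 0 0.

Lemma conj_inner n (u v : 'cV[C]_n) : (inner u v)^* = inner v u.
Proof. by rewrite /inner -adjmxE adjmxM adjmxK. Qed.

Lemma qformD n (v : 'cV[C]_n) A B : qform v (A + B) = qform v A + qform v B.
Proof. by rewrite /qform mulmxDr mulmxDl mxE. Qed.

Lemma qformZ n (v : 'cV[C]_n) c A : qform v (c *: A) = c * qform v A.
Proof. by rewrite /qform -scalemxAr -scalemxAl mxE. Qed.

Lemma qform_sum n (v : 'cV[C]_n) N (F : 'I_N -> 'M[C]_n) :
  qform v (\sum_(k < N) F k) = \sum_(k < N) qform v (F k).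
Proof. by rewrite /qform mulmx_sumr mulmx_suml summxE. Qed.

Lemma qform_proj n (v w : 'cV[C]_n) : qform v (proj w) = inner v w * inner w v.
Proof. by rewrite /qform /proj !mulmxA -(mulmxA (adjmx v *m w)) [LHS]mxE big_ord1. Qed.

Lemma qform_mxtrace n (v : 'cV[C]_n) A : qform v A = \tr (A *m proj v).
Proof. by rewrite /proj mulmxA mxtrace_mulC trace_mx11 mulmxA. Qed.

Lemma mxtrace_proj n (v : 'cV[C]_n) : \tr (proj v) = inner v v.
Proof. by rewrite /proj mxtrace_mulC trace_mx11. Qed.

Lemma projE n (v : 'cV[C]_n) i j : proj v i j = v i 0 * (v j 0)^*.
Proof. by rewrite /proj mxE big_ord1 adjmxE. Qed.

Lemma projZ n c (v : 'cV[C]_n) : proj (c *: v) = (c * c^*) *: proj v.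
Proof. by rewrite /proj adjmxZ -scalemxAr -scalemxAl scalerA mulrC. Qed.

Lemma proj_delta n (i : 'I_n) : proj (delta_mx i 0 : 'cV[C]_n) = delta_mx i i.
Proof. by rewrite /proj /adjmx map_delta_mx trmx_delta mul_delta_mx. Qed.

Lemma sum_proj_delta n : \sum_(i < n) proj (delta_mx i 0) = 1%:M :> 'M[C]_n.
Proof. by rewrite mx1_sum_delta; apply: eq_bigr => i _; rewrite proj_delta. Qed.

Lemma mxtrace_tens m n (A : 'M[C]_m) (B : 'M[C]_n) : \tr (A *t B) = \tr A * \tr B.
Proof. by rewrite /mxtrace mulr_sum; apply: eq_bigr => k _; rewrite mxE. Qed.

(** * Complete positivity *)

Lemma big_mxtens (V : nmodType) m n (F : 'I_(m * n) -> V) :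
  \sum_p F p = \sum_(i < m) \sum_(a < n) F (mxtens_index (i, a)).
Proof.
rewrite pair_big /=; apply: reindex => /=.
by exists (@mxtens_unindex m n) => [[i a]|p] _; rewrite ?mxtens_indexK ?mxtens_unindexK.
Qed.

Lemma sum_tens1mx_row k n (A : 'M[C]_n) i a (F : 'I_(k * n) -> C) :
  \sum_p (1%:M *t A) (mxtens_index (i, a)) p * F p =
  \sum_b A a b * F (mxtens_index (i, b)).
Proof.
rewrite big_mxtens (bigD1 i) //= addrC big1 ?add0r => [|i' /negbTE i'i].
  by apply: eq_bigr => b _; rewrite tensmxE mxE eqxx mul1r.
by apply: big1 => b _; rewrite tensmxE mxE eq_sym i'i !mul0r.
Qed.

Lemma sum_tens1mx_col k n (A : 'M[C]_n) j b (F : 'I_(k * n) -> C) :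
  \sum_q F q * (1%:M *t A) q (mxtens_index (j, b)) =
  \sum_a F (mxtens_index (j, a)) * A a b.
Proof.
rewrite big_mxtens (bigD1 j) //= addrC big1 ?add0r => [|j' /negbTE j'j].
  by apply: eq_bigr => a _; rewrite tensmxE mxE eqxx mul1r.
by apply: big1 => a _; rewrite tensmxE mxE j'j !mul0r mulr0.
Qed.

Lemma ampl_kraus k (K : 'M[C]_(2 * 2)) (X : 'M[C]_(k * (2 * 2))) :
  ampl (fun Y => K *m Y *m adjmx K) X =
  (1%:M *t K) *m X *m adjmx (1%:M *t K).
Proof.
rewrite adjmx_tens (_ : adjmx 1%:M = 1%:M :> 'M[C]_k); last first.
  by apply/matrixP=> i j; rewrite adjmxE !mxE eq_sym rmorph_nat.
apply/matrixP=> p q; case: (mxtens_indexP p) => i a; case: (mxtens_indexP q) => j b.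
rewrite !mxE !mxtens_indexK sum_tens1mx_col [LHS]mxE.
apply: eq_bigr => b' _; congr (_ * _).
by rewrite !mxE sum_tens1mx_row; apply: eq_bigr => a' _; rewrite mxE.
Qed.

Lemma cp_kraus (K : 'M[C]_(2 * 2)) : completely_positive (fun Y => K *m Y *m adjmx K).
Proof. by move=> k X /(psd_mulmx_adj (1%:M *t K)); rewrite -ampl_kraus. Qed.

Lemma cp_ext (L1 L2 : endo) : L1 =1 L2 -> completely_positive L1 -> completely_positive L2.
Proof.
move=> eL cpL k X /cpL; congr psd; apply/matrixP=> p q; rewrite !mxE.
by case: (mxtens_unindex p) => i a; case: (mxtens_unindex q) => j b; rewrite eL.
Qed.

Lemma cpD (L1 L2 : endo) : completely_positive L1 -> completely_positive L2 ->
  completely_positive (fun Y => L1 Y + L2 Y).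
Proof.
move=> cp1 cp2 k X hX; have := psdD (cp1 k X hX) (cp2 k X hX).
congr psd; apply/matrixP=> p q; rewrite !mxE.
by case: (mxtens_unindex p) => i a; case: (mxtens_unindex q) => j b; rewrite mxE.
Qed.

Lemma cpZ c (L : endo) : 0 <= c -> completely_positive L ->
  completely_positive (fun Y => c *: L Y).
Proof.
move=> c0 cpL k X hX; have := psdZ c0 (cpL k X hX).
congr psd; apply/matrixP=> p q; rewrite !mxE.
by case: (mxtens_unindex p) => i a; case: (mxtens_unindex q) => j b; rewrite mxE.
Qed.

Lemma cp_qform_proj (w u : 'cV[C]_(2 * 2)) :
  completely_positive (fun Y => qform w Y *: proj u).
Proof.
apply: cp_ext (cp_kraus (u *m adjmx w)) => Y.
rewrite adjmxM adjmxK !mulmxA -(mulmxA u) -(mulmxA u) [_ *m w]mx11_scalar.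
by rewrite mul_mx_scalar -scalemxAl.
Qed.

(** * Bell states and the separable cone *)

Lemma conj_invsqrt2 : s^* = s.
Proof. exact: conjc_real. Qed.

(* Stated without an inverse so that it can be passed to [ring]. *)
Lemma invsqrt2_sqr : 2 * (s * s) = 1.
Proof.
rewrite /invsqrt2 -rmorphM -invfM -expr2 sqr_sqrtr ?ler0n //.
by rewrite fmorphV rmorph_nat mulfV ?pnatr_eq0.
Qed.

Lemma sum_ord2 (V : nmodType) (F : 'I_2 -> V) : \sum_(a < 2) F a = F 0 + F 1.
Proof. by rewrite big_ord_recl big_ord1; congr (_ + F _); apply: val_inj. Qed.

Lemma inner2 (u v : 'cV[C]_2) : inner u v = (u 0 0)^* * v 0 0 + (u 1 0)^* * v 1 0.
Proof. by rewrite /inner mxE sum_ord2 !adjmxE. Qed.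

Lemma inner4 (u v : 'cV[C]_(2 * 2)) : inner u v =
  \sum_(a < 2) \sum_(b < 2) (u (mxtens_index (a, b)) 0)^* * v (mxtens_index (a, b)) 0.
Proof.
rewrite /inner mxE big_mxtens.
by apply: eq_bigr => a _; apply: eq_bigr => b _; rewrite adjmxE.
Qed.

(* [u *t v] has type ['M_(m * n, 1 * 1)]; [tensv] retypes it as a column vector. *)
Definition tensv m n (u : 'cV[C]_m) (v : 'cV[C]_n) : 'cV[C]_(m * n) := u *t v.

Lemma tensvE m n (u : 'cV[C]_m) (v : 'cV[C]_n) a b :
  tensv u v (mxtens_index (a, b)) 0 = u a 0 * v b 0.
Proof. by rewrite mxE mxtens_indexK [(mxtens_unindex _).1]ord1 [(mxtens_unindex _).2]ord1. Qed.

Lemma proj_tensv m n (u : 'cV[C]_m) (v : 'cV[C]_n) : proj (tensv u v) = proj u *t proj v.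
Proof. by rewrite /proj /tensv -tensmx_mul -adjmx_tens. Qed.

Lemma ketE (a b c d : 'I_2) : ket a b (mxtens_index (c, d)) 0 = ((c == a) && (d == b))%:R.
Proof. by rewrite mxE (inj_eq (can_inj (@mxtens_indexK 2 2))) xpair_eqE andbT. Qed.

Lemma ord2P (P : 'I_2 -> Prop) : P 0 -> P 1 -> forall a, P a.
Proof. by move=> P0 P1 [[|[|//]] lt_a2]; [move: P0 | move: P1]; congr P; apply: val_inj. Qed.

Lemma cV4P (u v : 'cV[C]_(2 * 2)) :
  (forall a b, u (mxtens_index (a, b)) 0 = v (mxtens_index (a, b)) 0) -> u = v.
Proof.
by move=> uv; apply/matrixP=> p q; case: (mxtens_indexP p) => a b; rewrite [q]ord1.
Qed.

Definition xplus : 'cV[C]_2 := s *: (e_ 0 + e_ 1).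
Definition xminus : 'cV[C]_2 := s *: (e_ 0 - e_ 1).
Definition yplus : 'cV[C]_2 := s *: (e_ 0 + 'i *: e_ 1).
Definition yminus : 'cV[C]_2 := s *: (e_ 0 - 'i *: e_ 1).

Ltac eval_entries :=
  rewrite /bell1 /bell2 /bell3 /bell4 ?(inner2, inner4) ?sum_ord2;
  rewrite ?(tensvE, ketE, mxE) /=;
  rewrite ?(conjCD, conjCN, conjCM, conjC0, conjC1, conjCi, conj_invsqrt2);
  ring: invsqrt2_sqr (sqrCi C).

Ltac eval_vec := apply: cV4P; apply: ord2P; apply: ord2P; eval_entries.

Lemma unit_delta n (i : 'I_n) : unit_vec (delta_mx i 0 : 'cV[C]_n).
Proof.
rewrite /unit_vec mxE (bigD1 i) //= big1 => [|j /negbTE ji]; rewrite !mxE ?ji.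
  by rewrite eqxx /= conjC1 mulr1 addr0.
by rewrite mulr0.
Qed.

Lemma unit_xplus : unit_vec xplus. Proof. rewrite /unit_vec -/(inner _ _). eval_entries. Qed.
Lemma unit_xminus : unit_vec xminus. Proof. rewrite /unit_vec -/(inner _ _). eval_entries. Qed.
Lemma unit_yplus : unit_vec yplus. Proof. rewrite /unit_vec -/(inner _ _). eval_entries. Qed.
Lemma unit_yminus : unit_vec yminus. Proof. rewrite /unit_vec -/(inner _ _). eval_entries. Qed.

Lemma unit_bell1 : unit_vec bell1. Proof. rewrite /unit_vec -/(inner _ _). eval_entries. Qed.
Lemma unit_bell2 : unit_vec bell2. Proof. rewrite /unit_vec -/(inner _ _). eval_entries. Qed.
Lemma unit_bell3 : unit_vec bell3. Proof. rewrite /unit_vec -/(inner _ _). eval_entries. Qed.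
Lemma unit_bell4 : unit_vec bell4. Proof. rewrite /unit_vec -/(inner _ _). eval_entries. Qed.

Lemma inner_bell1_bell2 : inner bell1 bell2 = 0. Proof. eval_entries. Qed.
Lemma inner_bell1_ket01 : inner bell1 (ket 0 1) = 0. Proof. eval_entries. Qed.
Lemma inner_bell1_ket10 : inner bell1 (ket 1 0) = 0. Proof. eval_entries. Qed.

Lemma inner_bell1_tensv (phi chi : 'cV[C]_2) :
  inner bell1 (tensv phi chi) = s * (phi 0 0 * chi 0 0 + phi 1 0 * chi 1 0).
Proof. eval_entries. Qed.

Lemma proj_parallelogram n (v w : 'cV[C]_n) :
  proj (s *: (v + w)) + proj (s *: (v - w)) = proj v + proj w.
Proof.
apply/matrixP=> i j; rewrite ?(projE, mxE).
rewrite ?(conjCD, conjCN, conjCM, conj_invsqrt2); ring: invsqrt2_sqr.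
Qed.

Lemma proj_phase n c (v : 'cV[C]_n) : `|c| = 1 -> proj (c *: v) = proj v.
Proof. by move=> c1; rewrite projZ -normCK c1 expr1n scale1r. Qed.

Definition sep_cone (A : 'M[C]_(2 * 2)) : Prop :=
  exists (N : nat) (p : 'I_N -> R) (phi chi : 'I_N -> 'cV[C]_2),
    [/\ forall k, 0 <= p k, forall k, unit_vec (phi k) /\ unit_vec (chi k) &
        A = \sum_(k < N) (p k)%:C *: (proj (phi k) *t proj (chi k))].

Lemma sep_cone_prod (phi chi : 'cV[C]_2) :
  unit_vec phi -> unit_vec chi -> sep_cone (proj phi *t proj chi).
Proof.
move=> uphi uchi; exists 1%N, (fun=> 1), (fun=> phi), (fun=> chi).
by split=> [_|//|]; rewrite ?ler01 // big_ord1 rmorph1 scale1r.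
Qed.

Lemma sep_coneZ (c : C) A : 0 <= c -> sep_cone A -> sep_cone (c *: A).
Proof.
move=> c_ge0 [N [p [phi [chi [p0 uv ->]]]]].
have [r -> r0] : exists2 r, c = r%:C & 0 <= r.
  by exists (complex.Re c); rewrite -?ler0c RRe_real ?ger0_real.
exists N, (fun k => r * p k), phi, chi; split=> // [k|]; first exact: mulr_ge0.
by rewrite scaler_sumr; apply: eq_bigr => k _; rewrite scalerA rmorphM.
Qed.

Lemma sep_coneD A B : sep_cone A -> sep_cone B -> sep_cone (A + B).
Proof.
move=> [N [p [phi [chi [p0 uv ->]]]]] [M [q [psi [xi [q0 uw ->]]]]].
pose glue T (f : 'I_N -> T) (g : 'I_M -> T) k :=
  match split k with inl i => f i | inr j => g j end.
exists (N + M)%N, (glue _ p q), (glue _ phi psi), (glue _ chi xi).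
split=> [k|k|]; rewrite /glue.
- by case: (split k).
- by case: (split k).
rewrite big_split_ord; apply: f_equal2; apply: eq_bigr => i _.
  by rewrite (unsplitK (inl i)).
by rewrite (unsplitK (inr i)).
Qed.

Lemma mxtrace_proj_unit n (v : 'cV[C]_n) : unit_vec v -> \tr (proj v) = 1.
Proof. by rewrite mxtrace_proj. Qed.

Lemma separable_sep_cone A : sep_cone A -> \tr A = 1 -> separable A.
Proof.
move=> [N [p [phi [chi [p0 uv eA]]]]] trA; exists N, p, phi, chi; split=> //; split=> //.
apply: (@complexI R); rewrite rmorph_sum rmorph1 -trA eA.
rewrite (big_morph _ (@mxtraceD _ _) (@mxtrace0 _ _)).
apply: eq_bigr => k _; have [uphi uchi] := uv k.
by rewrite mxtraceZ mxtrace_tens !mxtrace_proj_unit // !mulr1.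
Qed.

Lemma sep_cone_pair (v w : 'cV[C]_(2 * 2)) (phi chi phi' chi' : 'cV[C]_2) :
  unit_vec phi -> unit_vec chi -> unit_vec phi' -> unit_vec chi' ->
  s *: (v + w) = tensv phi chi -> s *: (v - w) = tensv phi' chi' ->
  sep_cone (proj v + proj w).
Proof.
move=> uphi uchi uphi' uchi' vw_sum vw_diff.
rewrite -proj_parallelogram vw_sum vw_diff !proj_tensv.
by apply: sep_coneD; apply: sep_cone_prod.
Qed.

Lemma sep_cone_bell12 : sep_cone (proj bell1 + proj bell2).
Proof.
by apply: (sep_cone_pair (unit_delta 0) (unit_delta 0) (unit_delta 1) (unit_delta 1)); eval_vec.
Qed.

Lemma sep_cone_bell34 : sep_cone (proj bell3 + proj bell4).
Proof.
by apply: (sep_cone_pair (unit_delta 1) (unit_delta 0) (unit_delta 0) (unit_delta 1)); eval_vec.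
Qed.

Lemma sep_cone_bell13 : sep_cone (proj bell1 + proj bell3).
Proof. by apply: (sep_cone_pair unit_xplus unit_xplus unit_xminus unit_xminus); eval_vec. Qed.

Lemma sep_cone_bell24 : sep_cone (proj bell2 + proj bell4).
Proof. by apply: (sep_cone_pair unit_xplus unit_xminus unit_xminus unit_xplus); eval_vec. Qed.

Lemma sep_cone_bell14 : sep_cone (proj bell1 + proj bell4).
Proof.
rewrite -(proj_phase bell4 (normCi C)).
by apply: (sep_cone_pair unit_yplus unit_yminus unit_yminus unit_yplus); eval_vec.
Qed.

Lemma sep_cone_bell23 : sep_cone (proj bell2 + proj bell3).
Proof.
rewrite -(proj_phase bell3 (normCi C)).
by apply: (sep_cone_pair unit_yplus unit_yplus unit_yminus unit_yminus); eval_vec.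
Qed.

Lemma cauchy_schwarz2 (a b c d : C) :
  (a * c + b * d) * (a * c + b * d)^* <= (a^* * a + b^* * b) * (c^* * c + d^* * d).
Proof.
rewrite -subr_ge0 (_ : _ - _ = (a * d^* - b * c^*) * (a * d^* - b * c^*)^*).
  exact: mul_conjC_ge0.
by rewrite ?(conjCD, conjCN, conjCM, conjCK); ring.
Qed.

Lemma unit_vec2 (v : 'cV[C]_2) : unit_vec v -> (v 0 0)^* * v 0 0 + (v 1 0)^* * v 1 0 = 1.
Proof. by rewrite -inner2. Qed.

Lemma qform_bell1_prod_le (phi chi : 'cV[C]_2) :
  unit_vec phi -> unit_vec chi -> qform bell1 (proj phi *t proj chi) <= 2^-1.
Proof.
move=> /unit_vec2 uphi /unit_vec2 uchi.
rewrite -proj_tensv qform_proj -[inner (tensv _ _) _]conj_inner inner_bell1_tensv.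
rewrite conjCM conj_invsqrt2 mulrACA.
have -> : s * s = 2^-1.
  by apply: (@mulfI _ 2); rewrite ?pnatr_eq0 // invsqrt2_sqr divff ?pnatr_eq0.
rewrite -[X in _ <= X]mulr1; apply: ler_wpM2l; first by rewrite invr_ge0 ler0n.
by have := cauchy_schwarz2 (phi 0 0) (phi 1 0) (chi 0 0) (chi 1 0); rewrite uphi uchi mulr1.
Qed.

Lemma qform_bell1_separable rho : separable rho -> qform bell1 rho <= 2^-1.
Proof.
case=> N [p [phi [chi [p0 [p1 [uv ->]]]]]].
have -> : 2^-1 = \sum_(k < N) (p k)%:C * 2^-1 :> C.
  by rewrite -mulr_suml -rmorph_sum p1 rmorph1 mul1r.
rewrite qform_sum; apply: ler_sum => k _; rewrite qformZ.
apply: ler_wpM2l; first by rewrite ler0c.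
by have [uphi uchi] := uv k; apply: qform_bell1_prod_le.
Qed.

Lemma mix_pair_decomp n (P1 P2 P3 P4 : 'M[C]_n) (x t2 t3 t4 : C) : t2 + t3 + t4 = 1 ->
  x *: P1 + (1 - x) *: (t2 *: P2 + t3 *: P3 + t4 *: P4) =
  (x * t2) *: (P1 + P2) + (x * t3) *: (P1 + P3) + (x * t4) *: (P1 + P4)
  + ((1 - 2 * x) * (1 - 2 * t4) / 2) *: (P2 + P3)
  + ((1 - 2 * x) * (1 - 2 * t3) / 2) *: (P2 + P4)
  + ((1 - 2 * x) * (1 - 2 * t2) / 2) *: (P3 + P4).
Proof.
move=> t_sum; have -> : t4 = 1 - t2 - t3 by rewrite -t_sum; ring.
by apply/matrixP=> i j; rewrite !mxE; field.
Qed.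

Lemma sep_cone_bell_mix (x t2 t3 t4 : C) :
  0 <= x <= 2^-1 -> 0 <= t2 <= 2^-1 -> 0 <= t3 <= 2^-1 -> 0 <= t4 <= 2^-1 ->
  t2 + t3 + t4 = 1 ->
  sep_cone (x *: proj bell1 + (1 - x) *: (t2 *: proj bell2 + t3 *: proj bell3 + t4 *: proj bell4)).
Proof.
have half_ge0 (y : C) : y <= 2^-1 -> 0 <= 1 - 2 * y.
  by move=> y_le; rewrite (_ : 1 - 2 * y = 2 * (2^-1 - y)) ?mulr_ge0 ?subr_ge0 //; field.
move=> /andP[x0 /half_ge0 x1] /andP[t20 /half_ge0 t21] /andP[t30 /half_ge0 t31].
move=> /andP[t40 /half_ge0 t41] t_sum; rewrite mix_pair_decomp //.
have c_ge0 (y z : C) : 0 <= y -> 0 <= z -> 0 <= y * z / 2.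
  by move=> y0 z0; rewrite !mulr_ge0 ?invr_ge0.
apply: sep_coneD; first apply: sep_coneD; first apply: sep_coneD;
  first apply: sep_coneD; first apply: sep_coneD.
all: apply: sep_coneZ; first by rewrite ?c_ge0 ?mulr_ge0.
- exact: sep_cone_bell12.
- exact: sep_cone_bell13.
- exact: sep_cone_bell14.
- exact: sep_cone_bell23.
- exact: sep_cone_bell24.
- exact: sep_cone_bell34.
Qed.

(** * The channel *)

Definition bell_mix (t2 t3 t4 : R) : 'M[C]_(2 * 2) :=
  t2%:C *: proj bell2 + t3%:C *: proj bell3 + t4%:C *: proj bell4.

(* Written via the trace; [qform_bell_basis] shows that this is the
   measure-and-prepare map of the header. *)
Definition bell_channel (t2 t3 t4 : R) (Y : 'M[C]_(2 * 2)) : 'M[C]_(2 * 2) :=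
  qform bell1 Y *: proj bell1 + (\tr Y - qform bell1 Y) *: bell_mix t2 t3 t4.

Lemma bell_channel_is_linear t2 t3 t4 : linear (bell_channel t2 t3 t4).
Proof.
move=> a Y Z; rewrite /bell_channel qformD qformZ mxtraceD mxtraceZ.
rewrite (_ : _ - _ = a * (\tr Y - qform bell1 Y) + (\tr Z - qform bell1 Z)); last by ring.
rewrite [(_ + _) *: proj _]scalerDl [(_ + _) *: bell_mix _ _ _]scalerDl.
by rewrite -!scalerA addrACA -scalerDr.
Qed.

HB.instance Definition _ t2 t3 t4 :=
  GRing.isLinear.Build C 'M[C]_(2 * 2) 'M[C]_(2 * 2) *:%R (bell_channel t2 t3 t4)
    (bell_channel_is_linear t2 t3 t4).

Lemma proj_bell_basis : proj bell1 + proj bell2 + proj (ket 0 1) + proj (ket 1 0) = 1%:M.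
Proof.
rewrite /bell1 /bell2 proj_parallelogram -(sum_proj_delta (2 * 2)) big_mxtens !sum_ord2.
have perm (a b c d : 'M[C]_(2 * 2)) : a + d + b + c = a + b + (c + d).
  by rewrite -!addrA; congr (_ + _); rewrite addrC -addrA.
exact: perm.
Qed.

Lemma qform_bell_basis Y :
  qform bell1 Y + qform bell2 Y + qform (ket 0 1) Y + qform (ket 1 0) Y = \tr Y.
Proof. by rewrite !qform_mxtrace -!mxtraceD -!mulmxDr proj_bell_basis mulmx1. Qed.

Lemma cp_qform_bell_mix (w : 'cV[C]_(2 * 2)) t2 t3 t4 : 0 <= t2 -> 0 <= t3 -> 0 <= t4 ->
  completely_positive (fun Y => qform w Y *: bell_mix t2 t3 t4).
Proof.
move=> t2_ge0 t3_ge0 t4_ge0.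
apply: (@cp_ext (fun Y => t2%:C *: (qform w Y *: proj bell2)
  + t3%:C *: (qform w Y *: proj bell3) + t4%:C *: (qform w Y *: proj bell4))).
  (* Generalizing the concrete 4 x 4 matrices keeps rewrites from unfolding
     them, which is very slow; the same device is used below. *)
  move=> Y; rewrite /bell_mix; move: (qform w Y) (proj bell2) (proj bell3) (proj bell4).
  by move=> q P2 P3 P4; rewrite !scalerDr !scalerA !(mulrC q).
by apply: cpD; [apply: cpD|]; apply: cpZ; rewrite ?ler0c //; apply: cp_qform_proj.
Qed.

Lemma bell_channel_cp t2 t3 t4 : 0 <= t2 -> 0 <= t3 -> 0 <= t4 ->
  completely_positive (bell_channel t2 t3 t4).
Proof.
move=> t2_ge0 t3_ge0 t4_ge0.
apply: (@cp_ext (fun Y => qform bell1 Y *: proj bell1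
  + (qform bell2 Y *: bell_mix t2 t3 t4 + qform (ket 0 1) Y *: bell_mix t2 t3 t4
     + qform (ket 1 0) Y *: bell_mix t2 t3 t4))).
  move=> Y; rewrite /bell_channel -(qform_bell_basis Y); move: (bell_mix t2 t3 t4) => M.
  by congr (_ + _); rewrite -!scalerDl; congr (_ *: _); ring.
apply: cpD; first exact: cp_qform_proj.
by apply: cpD; [apply: cpD|]; apply: cp_qform_bell_mix.
Qed.

Lemma mxtrace_bell_mix t2 t3 t4 : \tr (bell_mix t2 t3 t4) = (t2 + t3 + t4)%:C.
Proof.
rewrite /bell_mix; move: (mxtrace_proj_unit unit_bell2) (mxtrace_proj_unit unit_bell3).
move: (proj bell2) (proj bell3) (proj bell4) (mxtrace_proj_unit unit_bell4) => P2 P3 P4 tr4 tr2 tr3.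
by rewrite !mxtraceD !mxtraceZ tr2 tr3 tr4 !mulr1 !rmorphD.
Qed.

Lemma bell_channel_tp t2 t3 t4 : t2 + t3 + t4 = 1 -> trace_preserving (bell_channel t2 t3 t4).
Proof.
move=> t_sum Y; rewrite /bell_channel; move: (mxtrace_bell_mix t2 t3 t4).
move: (bell_mix t2 t3 t4) (proj bell1) (mxtrace_proj_unit unit_bell1) => M P1 tr1 trM.
by rewrite mxtraceD !mxtraceZ trM tr1 t_sum rmorph1; ring.
Qed.

Lemma real_half_bound (t : R) : 0 <= t <= 2^-1 -> 0 <= t%:C <= 2^-1.
Proof.
have -> : 2^-1 = (2^-1)%:C :> C by rewrite fmorphV rmorph_nat.
by rewrite ler0c lecR.
Qed.

Lemma bell_channel_separable t2 t3 t4 :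
  0 <= t2 <= 2^-1 -> 0 <= t3 <= 2^-1 -> 0 <= t4 <= 2^-1 -> t2 + t3 + t4 = 1 ->
  forall rho, density rho -> separable rho -> separable (bell_channel t2 t3 t4 rho).
Proof.
move=> t2b t3b t4b t_sum rho [[_ rho_psd] tr_rho] sep_rho.
apply: separable_sep_cone; last by rewrite bell_channel_tp.
rewrite /bell_channel tr_rho /bell_mix; apply: sep_cone_bell_mix; rewrite ?real_half_bound //.
  by rewrite rho_psd qform_bell1_separable.
by rewrite -!rmorphD t_sum rmorph1.
Qed.

Lemma bell_channel_non_entangling t2 t3 t4 :
  0 <= t2 <= 2^-1 -> 0 <= t3 <= 2^-1 -> 0 <= t4 <= 2^-1 -> t2 + t3 + t4 = 1 ->
  non_entangling (bell_channel t2 t3 t4).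
Proof.
move=> t2b t3b t4b t_sum; split.
  by move: t2b t3b t4b => /andP[? _] /andP[? _] /andP[? _]; apply: bell_channel_cp.
by split; [exact: bell_channel_tp | exact: bell_channel_separable].
Qed.

Lemma unit_ket a b : unit_vec (ket a b).
Proof. exact: unit_delta. Qed.

Lemma qform_bell1_rho l1 l2 l3 l4 : qform bell1 (rho_lam l1 l2 l3 l4) = l1%:C.
Proof.
rewrite /rho_lam; move: (qform_proj bell1 bell1) (qform_proj bell1 (ket 0 1)).
move: (qform_proj bell1 bell2) (qform_proj bell1 (ket 1 0)).
move: (proj bell1) (proj (ket 0 1)) (proj bell2) (proj (ket 1 0)) => P1 P2 P3 P4 e4 e3 e1 e2.
rewrite !qformD !qformZ e1 e2 e3 e4 inner_bell1_ket01 inner_bell1_bell2 inner_bell1_ket10.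
by rewrite (unit_bell1 : inner _ _ = 1) !mul0r !mulr0 !mulr1 !addr0.
Qed.

Lemma mxtrace_rho l1 l2 l3 l4 : \tr (rho_lam l1 l2 l3 l4) = (l1 + l2 + l3 + l4)%:C.
Proof.
rewrite /rho_lam; move: (mxtrace_proj_unit unit_bell1) (mxtrace_proj_unit (unit_ket 0 1)).
move: (mxtrace_proj_unit unit_bell2) (mxtrace_proj_unit (unit_ket 1 0)).
move: (proj bell1) (proj (ket 0 1)) (proj bell2) (proj (ket 1 0)) => P1 P2 P3 P4 e4 e3 e1 e2.
by rewrite !mxtraceD !mxtraceZ e1 e2 e3 e4 !mulr1 !rmorphD.
Qed.

Lemma bell_channel_rho t2 t3 t4 l1 l2 l3 l4 :
  bell_channel t2 t3 t4 (rho_lam l1 l2 l3 l4) =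
  l1%:C *: proj bell1 + (l2 + l3 + l4)%:C *: bell_mix t2 t3 t4.
Proof. by rewrite /bell_channel qform_bell1_rho mxtrace_rho; congr (_ + _ *: _); ring. Qed.

Lemma bell_mix_weights (l2 l3 l4 : R) : 0 <= l2 -> 0 <= l3 -> 0 <= l4 ->
  2 * l2 <= l2 + l3 + l4 -> 2 * l3 <= l2 + l3 + l4 -> 2 * l4 <= l2 + l3 + l4 ->
  exists t2 t3 t4, [/\ 0 <= t2 <= 2^-1, 0 <= t3 <= 2^-1, 0 <= t4 <= 2^-1,
    t2 + t3 + t4 = 1 &
    (l2 + l3 + l4)%:C *: bell_mix t2 t3 t4 =
    l2%:C *: proj bell2 + l3%:C *: proj bell3 + l4%:C *: proj bell4].
Proof.
move=> l2_ge0 l3_ge0 l4_ge0 l2_le l3_le l4_le; rewrite /bell_mix.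
move: (proj bell2) (proj bell3) (proj bell4) => P2 P3 P4.
have [S0|S_neq0] := eqVneq (l2 + l3 + l4) 0.
  have [-> -> ->] : [/\ l2 = 0, l3 = 0 & l4 = 0] by split; lra.
  exists 2^-1, 2^-1, 0; rewrite !addr0 !rmorph0 !scale0r !addr0 !lexx invr_ge0 ler0n.
  by split=> //; field.
have S_gt0 : 0 < l2 + l3 + l4 by rewrite lt_def S_neq0; lra.
have t_le (l : R) : 2 * l <= l2 + l3 + l4 -> l / (l2 + l3 + l4) <= 2^-1.
  by move=> l_le; rewrite ler_pdivrMr // ler_pdivlMl; lra.
exists (l2 / (l2 + l3 + l4)), (l3 / (l2 + l3 + l4)), (l4 / (l2 + l3 + l4)).
have S_ge0 := ltW S_gt0.
rewrite !divr_ge0 ?t_le //; split=> //; first by rewrite -!mulrDl divff.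
by rewrite !scalerDr !scalerA -!rmorphM ![(l2 + l3 + l4) * _]mulrC !divfK.
Qed.

End NonEntanglingChannel.

Theorem theorem3 (R : realType) (l1 l2 l3 l4 : R) :
  l1 >= l2 -> l2 >= l3 -> l3 >= l4 -> l4 >= 0 ->
  l1 + l2 + l3 + l4 = 1 ->
  1 - l1 - 2 * l2 >= 0 ->
  exists L : {linear 'M[R[i]]_(2 * 2) -> 'M[R[i]]_(2 * 2)},
    non_entangling L /\ L (rho_lam l1 l2 l3 l4) = sigma_lam l1 l2 l3 l4.
Proof.
move=> l12 l23 l34 l4_ge0 l_sum l_bound.
have [||||||t2 [t3 [t4 [t2b t3b t4b t_sum mix_eq]]]] := @bell_mix_weights R l2 l3 l4; try lra.
exists (bell_channel t2 t3 t4); split; first exact: bell_channel_non_entangling.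
rewrite /= bell_channel_rho mix_eq /sigma_lam.
by move: (proj _) (proj _) (proj _) (proj _) => P1 P2 P3 P4; rewrite !addrA.
Qed.
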